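(* Let $a,b>0$ with $a\in[30,\tfrac43b]$. Then $$\Big|\mathbb E_{x\sim\mathcal N(b,1)}\big[-\tfrac12\tanh''(ax)a^2+\tanh'(ax)ax\big]\Big|\le0.01.$$ *)

From Stdlib Require Import Reals.
From Coquelicot Require Import Coquelicot.
Open Scope R_scope.

Definition gauss_pdf (b x : R) : R := exp (- (x - b) ^ 2 / 2) / sqrt (2 * PI).

Definition F5_fun (a x : R) : R :=
  - / 2 * Derive_n tanh 2 (a * x) * a ^ 2 + Derive tanh (a * x) * a * x.

Definition F5_integrand (a b x : R) : R := F5_fun a x * gauss_pdf b x.

(* Since tanh' = 1 / cosh^2 and tanh'' = -2 tanh / cosh^2, the integrand is
   a (a tanh (a x) + x) / cosh^2 (a x) times the N(b,1) density.  With
   cosh (a x) >= e^(a|x|) / 2, |a tanh (a x) + x| <= a e^|x| and completing the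
   square (this is where a >= 3 and 3 a <= 4 b enter), it is dominated by
   C / cosh^2 x with C = 4 a^2 e^(-a^2/4).  That function has the bounded
   antiderivative C tanh, so x |-> int_0^x of the integrand is Cauchy at both
   infinities and the improper integral has absolute value at most 2 C, which is
   below 0.01 once a >= 30. *)

From Stdlib Require Import Reals Lra Psatz.
From Coquelicot Require Import Coquelicot.
Open Scope R_scope.

Lemma is_RInt_gen_antiderivative (f F : R -> R) (la lb : R) :
  (forall x, is_derive F x (f x)) -> (forall x, continuous f x) ->
  filterlim F (Rbar_locally m_infty) (locally la) ->
  filterlim F (Rbar_locally p_infty) (locally lb) ->
  is_RInt_gen f (Rbar_locally m_infty) (Rbar_locally p_infty) (lb - la).
Proof.
  intros dF cf Fm Fp.
  assert (DF : forall x, Derive F x = f x) by (intros; apply is_derive_unique, dF).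
  apply (is_RInt_gen_ext (Derive F)).
  - apply filter_forall; intros ab x _; apply DF.
  - apply is_RInt_gen_Derive; auto; apply filter_forall; intros ab x _.
    + eexists; apply dF.
    + apply (continuous_ext f); auto.
Qed.

Section DominatedIntegral.

Variables (f G H : R -> R).
Hypothesis f_cont : forall x, continuous f x.
Hypothesis G_cont : forall x, continuous G x.
Hypothesis H_derive : forall x, is_derive H x (G x).
Hypothesis f_le_G : forall x, Rabs (f x) <= G x.

Let ex_RInt_f u v : ex_RInt f u v.
Proof. apply (ex_RInt_continuous (V := R_CompleteNormedModule)); auto. Qed.

Lemma Rabs_RInt_le_increment u v : u <= v -> Rabs (RInt f u v) <= H v - H u.
Proof.
  intros uv.
  apply (norm_RInt_le f G u v _ (minus (H v) (H u))); auto.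
  - apply (RInt_correct (V := R_CompleteNormedModule)), ex_RInt_f.
  - apply (is_RInt_derive (V := R_CompleteNormedModule)); auto.
Qed.

Lemma Rabs_RInt_le_Rabs_increment u v : Rabs (RInt f u v) <= Rabs (H v - H u).
Proof.
  destruct (Rle_dec u v) as [uv | vu].
  - eapply Rle_trans; [apply Rabs_RInt_le_increment, uv | apply Rle_abs].
  - rewrite <- opp_RInt_swap by apply ex_RInt_f.
    change (Rabs (- RInt f v u) <= Rabs (H v - H u)).
    rewrite Rabs_Ropp, Rabs_minus_sym.
    eapply Rle_trans; [apply Rabs_RInt_le_increment; lra | apply Rle_abs].
Qed.

Lemma filterlim_RInt_dominated (z : Rbar) (l : R) :
  filterlim H (Rbar_locally z) (locally l) ->
  exists y, filterlim (RInt f 0) (Rbar_locally z) (locally y).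
Proof.
  intros Hz.
  apply (filterlim_locally_cauchy (F := Rbar_locally z)). intros eps.
  exists (fun x => ball l (pos_div_2 eps) (H x)). split.
  - exact (proj1 (filterlim_locally H l) Hz (pos_div_2 eps)).
  - intros u v Hu Hv.
    change (Rabs (RInt f 0 v - RInt f 0 u) < eps).
    rewrite <- (RInt_Chasles f 0 u v) by apply ex_RInt_f.
    change (Rabs (RInt f 0 u + RInt f u v - RInt f 0 u : R) < eps).
    replace (RInt f 0 u + RInt f u v - RInt f 0 u : R) with (RInt f u v : R) by lra.
    eapply Rle_lt_trans; [apply Rabs_RInt_le_Rabs_increment |].
    change (Rabs (H u - l) < eps / 2) in Hu.
    change (Rabs (H v - l) < eps / 2) in Hv.
    apply Rabs_def2 in Hu, Hv. apply Rabs_def1; lra.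
Qed.

Lemma is_RInt_gen_dominated (la lb : R) :
  filterlim H (Rbar_locally m_infty) (locally la) ->
  filterlim H (Rbar_locally p_infty) (locally lb) ->
  exists v, is_RInt_gen f (Rbar_locally m_infty) (Rbar_locally p_infty) v
    /\ Rabs v <= lb - la.
Proof.
  intros Hm Hp.
  destruct (filterlim_RInt_dominated _ _ Hm) as [ym Fm].
  destruct (filterlim_RInt_dominated _ _ Hp) as [yp Fp].
  assert (If : is_RInt_gen f (Rbar_locally m_infty) (Rbar_locally p_infty) (yp - ym)).
  { apply (is_RInt_gen_antiderivative _ (RInt f 0)); auto.
    intros x. apply (is_derive_RInt _ _ 0); auto.
    apply filter_forall; intros.
    apply (RInt_correct (V := R_CompleteNormedModule)), ex_RInt_f. }
  exists (yp - ym); split; auto.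
  refine (RInt_gen_norm f G _ _ _ _ If
            (is_RInt_gen_antiderivative G H la lb H_derive G_cont Hm Hp)).
  - apply (Filter_prod _ _ _ (fun x => x < 0) (fun y => 0 < y)); try (exists 0; auto).
    intros; simpl; lra.
  - apply filter_forall; intros; apply f_le_G.
Qed.

End DominatedIntegral.

Lemma exp_le_exp x y : x <= y -> exp x <= exp y.
Proof. intros [h | ->]; [left; apply exp_increasing, h | lra]. Qed.

Lemma cosh_pos y : 0 < cosh y.
Proof. unfold cosh; pose proof (exp_pos y); pose proof (exp_pos (- y)); lra. Qed.

Lemma cosh_sq_sub_sinh_sq y : cosh y ^ 2 - sinh y ^ 2 = 1.
Proof.
  unfold cosh, sinh.
  replace 1 with (exp y * exp (- y)) by (rewrite <- exp_plus, Rplus_opp_r; apply exp_0).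
  field.
Qed.

Lemma is_derive_tanh y : is_derive tanh y (/ cosh y ^ 2).
Proof.
  pose proof (cosh_pos y).
  replace (/ cosh y ^ 2) with ((cosh y * cosh y - sinh y * sinh y) / cosh y ^ 2).
  - apply is_derive_div; try apply is_derive_Reals;
      [apply derivable_pt_lim_sinh | apply derivable_pt_lim_cosh | lra].
  - replace (cosh y * cosh y - sinh y * sinh y) with (cosh y ^ 2 - sinh y ^ 2) by ring.
    rewrite cosh_sq_sub_sinh_sq. field. lra.
Qed.

Lemma is_derive_inv_cosh_sq y : is_derive (fun z => / cosh z ^ 2) y (- 2 * tanh y / cosh y ^ 2).
Proof.
  pose proof (cosh_pos y).
  replace (- 2 * tanh y / cosh y ^ 2) with (- (INR 2 * sinh y * cosh y ^ 1) / (cosh y ^ 2) ^ 2)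
    by (unfold tanh; simpl; field; lra).
  apply is_derive_inv; [| apply pow_nonzero; lra].
  apply is_derive_pow, is_derive_Reals, derivable_pt_lim_cosh.
Qed.

Lemma Derive_n_tanh_2 y : Derive_n tanh 2 y = - 2 * tanh y / cosh y ^ 2.
Proof.
  simpl. rewrite (Derive_ext _ (fun z => / cosh z ^ 2)).
  - apply is_derive_unique, is_derive_inv_cosh_sq.
  - intros; apply is_derive_unique, is_derive_tanh.
Qed.

Lemma tanh_exp y : tanh y = 1 - 2 / (exp (2 * y) + 1).
Proof.
  unfold tanh, sinh, cosh.
  pose proof (exp_pos y).
  replace (2 * y) with (y + y) by ring. rewrite exp_plus, exp_Ropp.
  field. split; nra.
Qed.

Lemma tanh_opp y : tanh (- y) = - tanh y.
Proof.
  pose proof (cosh_pos y) as H. unfold tanh, sinh, cosh in *.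
  rewrite Ropp_involutive. field. lra.
Qed.

Lemma is_lim_tanh_p : is_lim tanh p_infty 1.
Proof.
  apply is_lim_spec. intros eps. exists (/ eps). intros y Hy.
  pose proof (cond_pos eps) as Heps.
  assert (Hy0 : 0 < y) by (pose proof (Rinv_0_lt_compat eps Heps); lra).
  pose proof (exp_ineq1_le (2 * y)) as Hexp.
  rewrite tanh_exp.
  replace (1 - 2 / (exp (2 * y) + 1) - 1) with (- (2 / (exp (2 * y) + 1))) by ring.
  rewrite Rabs_Ropp, Rabs_right by (apply Rle_ge, Rdiv_le_0_compat; lra).
  apply Rlt_div_l; [lra |].
  assert (1 < eps * y) by (rewrite <- (Rinv_r eps) by lra; apply Rmult_lt_compat_l; lra).
  nra.
Qed.

Lemma is_lim_tanh_m : is_lim tanh m_infty (-1).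
Proof.
  apply (is_lim_ext (fun y => - tanh (- y))).
  { intros y. rewrite tanh_opp. ring. }
  apply (is_lim_opp _ _ 1), (is_lim_comp _ _ _ _ p_infty).
  - exact is_lim_tanh_p.
  - apply (is_lim_opp _ _ m_infty), is_lim_id.
  - exists 0. discriminate.
Qed.

Lemma Rabs_tanh_le_1 y : Rabs (tanh y) <= 1.
Proof.
  pose proof (exp_pos y); pose proof (exp_pos (- y)); pose proof (cosh_pos y).
  unfold tanh. rewrite Rabs_div, (Rabs_right (cosh y)) by lra.
  apply (Rmult_le_reg_r (cosh y)); [lra |].
  unfold Rdiv. rewrite Rmult_assoc, Rinv_l, Rmult_1_r, Rmult_1_l by lra.
  apply Rabs_le. unfold sinh, cosh. lra.
Qed.

Lemma exp_Rabs_le_2cosh y : exp (Rabs y) <= 2 * cosh y.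
Proof.
  pose proof (exp_pos y); pose proof (exp_pos (- y)).
  unfold cosh. destruct (Rle_dec 0 y); [rewrite Rabs_right | rewrite Rabs_left]; lra.
Qed.

Lemma cosh_le_exp_Rabs y : cosh y <= exp (Rabs y).
Proof.
  unfold cosh. destruct (Rle_dec 0 y).
  - rewrite Rabs_right by lra. pose proof (exp_le_exp (- y) y). lra.
  - rewrite Rabs_left by lra. pose proof (exp_le_exp y (- y)). lra.
Qed.

Lemma gauss_pdf_bounds b x : 0 < gauss_pdf b x <= exp (- (x - b) ^ 2 / 2).
Proof.
  unfold gauss_pdf.
  pose proof (exp_pos (- (x - b) ^ 2 / 2)).
  assert (1 <= sqrt (2 * PI)).
  { rewrite <- sqrt_1. apply sqrt_le_1_alt. pose proof PI2_3_2. lra. }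
  split.
  - apply Rdiv_lt_0_compat; lra.
  - apply (Rmult_le_reg_r (sqrt (2 * PI))); [lra |].
    unfold Rdiv. rewrite Rmult_assoc, Rinv_l by lra. nra.
Qed.

Lemma gauss_exponent_bound a b x : 3 <= a -> a <= 4 / 3 * b ->
  exp (- (x - b) ^ 2 / 2) * exp (Rabs x) ^ 3 <= exp (- (a ^ 2 / 4)) * exp (a * Rabs x) ^ 2.
Proof.
  intros ha hab.
  replace (exp (Rabs x) ^ 3) with (exp (Rabs x) * exp (Rabs x) * exp (Rabs x)) by ring.
  replace (exp (a * Rabs x) ^ 2) with (exp (a * Rabs x) * exp (a * Rabs x)) by ring.
  rewrite <- !exp_plus. apply exp_le_exp.
  destruct (Rle_dec 0 x).
  - rewrite Rabs_right by lra.
    assert (0 <= (x - b + a) ^ 2) by apply pow2_ge_0.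
    assert (0 <= (a - 3) * x) by nra.
    nra.
  - rewrite Rabs_left by lra.
    assert (b ^ 2 <= (x - b) ^ 2) by nra.
    nra.
Qed.

Lemma Rabs_affine_tanh_le a x : 1 <= a -> Rabs (a * tanh (a * x) + x) <= a * exp (Rabs x).
Proof.
  intros ha.
  pose proof (Rabs_tanh_le_1 (a * x)); pose proof (exp_ineq1_le (Rabs x)); pose proof (Rabs_pos x).
  eapply Rle_trans; [apply Rabs_triang |].
  rewrite Rabs_mult, (Rabs_pos_eq a) by lra. nra.
Qed.

Lemma F5_fun_eq a x : F5_fun a x = a * (a * tanh (a * x) + x) / cosh (a * x) ^ 2.
Proof.
  pose proof (cosh_pos (a * x)).
  unfold F5_fun. rewrite Derive_n_tanh_2, (is_derive_unique _ _ _ (is_derive_tanh _)).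
  field. lra.
Qed.

Lemma continuous_F5_integrand a b x : continuous (F5_integrand a b) x.
Proof.
  apply (continuous_ext (fun x => a * (a * tanh (a * x) + x) / cosh (a * x) ^ 2 * gauss_pdf b x)).
  { intros y. unfold F5_integrand. rewrite F5_fun_eq. reflexivity. }
  apply (ex_derive_continuous (K := R_AbsRing) (V := R_NormedModule)).
  pose proof (cosh_pos (a * x)) as Hc.
  unfold tanh, sinh, cosh, gauss_pdf in *.
  auto_derive. repeat split; nra.
Qed.

Lemma Rabs_F5_integrand_le a b x : 3 <= a -> a <= 4 / 3 * b ->
  Rabs (F5_integrand a b x) <= 4 * a ^ 2 * exp (- (a ^ 2 / 4)) / cosh x ^ 2.
Proof.
  intros ha hab.
  assert (HA : exp (a * Rabs x) <= 2 * cosh (a * x)).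
  { rewrite <- (Rabs_pos_eq a) at 1 by lra. rewrite <- Rabs_mult. apply exp_Rabs_le_2cosh. }
  pose proof (cosh_pos (a * x)); pose proof (cosh_pos x); pose proof (cosh_le_exp_Rabs x).
  pose proof (exp_pos (- (a ^ 2 / 4))); pose proof (exp_pos (Rabs x)).
  pose proof (exp_pos (a * Rabs x)).
  pose proof (Rabs_affine_tanh_le a x ltac:(lra)); pose proof (Rabs_pos (a * tanh (a * x) + x)).
  pose proof (gauss_exponent_bound a b x ha hab); pose proof (gauss_pdf_bounds b x).
  assert (Hc2 : 0 < cosh (a * x) ^ 2) by (apply pow_lt; lra).
  set (g := exp (- (x - b) ^ 2 / 2)) in *; set (K := exp (- (a ^ 2 / 4))) in *.
  unfold F5_integrand. rewrite F5_fun_eq.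
  unfold Rdiv. rewrite !Rabs_mult, Rabs_inv, (Rabs_pos_eq a), (Rabs_pos_eq (cosh (a * x) ^ 2)),
    (Rabs_pos_eq (gauss_pdf b x)) by lra.
  set (T := Rabs (a * tanh (a * x) + x)) in *; set (c := cosh (a * x)) in *.
  set (ch := cosh x) in *; set (E := exp (Rabs x)) in *; set (A := exp (a * Rabs x)) in *.
  assert (Hkey : a * T * gauss_pdf b x * ch ^ 2 <= 4 * a ^ 2 * K * c ^ 2).
  { apply Rle_trans with (a ^ 2 * (g * E ^ 3)).
    - replace (a ^ 2 * (g * E ^ 3)) with (a * (a * E) * g * E ^ 2) by ring.
      apply Rmult_le_compat; [| nra | | apply pow_incr; lra].
      { apply Rmult_le_pos; [apply Rmult_le_pos |]; lra. }
      apply Rmult_le_compat; [nra | lra | | lra].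
      apply Rmult_le_compat_l; lra.
    - replace (4 * a ^ 2 * K * c ^ 2) with (a ^ 2 * (K * (2 * c) ^ 2)) by ring.
      apply Rmult_le_compat_l; [nra |].
      apply Rle_trans with (K * A ^ 2); [lra |].
      apply Rmult_le_compat_l, pow_incr; lra. }
  apply (Rmult_le_reg_r (c ^ 2 * ch ^ 2)); [apply Rmult_lt_0_compat; [| apply pow_lt]; lra |].
  field_simplify; lra.
Qed.

Lemma sq_mul_exp_neg_quarter_sq_le a : 30 <= a -> 8 * a ^ 2 * exp (- (a ^ 2 / 4)) <= 0.01.
Proof.
  intros ha.
  set (y := a ^ 2 / 16).
  assert (Hy : 56 <= y) by (unfold y; nra).
  assert (Hexp : y ^ 4 <= exp (a ^ 2 / 4)).
  { replace (a ^ 2 / 4) with (y + y + y + y) by (unfold y; field).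
    rewrite !exp_plus. replace (y ^ 4) with (y * y * y * y) by ring.
    pose proof (exp_ineq1_le y).
    repeat apply Rmult_le_compat; try nra; repeat apply Rmult_le_pos; lra. }
  replace (8 * a ^ 2) with (128 * y) by (unfold y; field).
  rewrite exp_Ropp.
  apply (Rmult_le_reg_r (exp (a ^ 2 / 4))); [apply exp_pos |].
  rewrite Rmult_assoc, Rinv_l by (apply Rgt_not_eq, exp_pos).
  assert (12800 <= y ^ 3) by (replace (y ^ 3) with (y * y * y) by ring; nra).
  replace (y ^ 4) with (y * y ^ 3) in Hexp by ring.
  nra.
Qed.

Theorem lemmaF5 (a b : R) (ha : 0 < a) (hb : 0 < b)
  (ha30 : 30 <= a) (hab : a <= 4 / 3 * b) :
  exists v : R,
    is_RInt_gen (F5_integrand a b) (Rbar_locally m_infty) (Rbar_locally p_infty) v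
    /\ Rabs v <= 0.01.
Proof.
  set (C := 4 * a ^ 2 * exp (- (a ^ 2 / 4))).
  assert (HG : forall x, is_derive (fun y => C * tanh y) x (C * / cosh x ^ 2)).
  { intros x. apply is_derive_scal, is_derive_tanh. }
  destruct (is_RInt_gen_dominated (F5_integrand a b) (fun x => C / cosh x ^ 2)
              (fun x => C * tanh x)) with (la := - C) (lb := C) as [v [Hv Hle]].
  - apply continuous_F5_integrand.
  - intros x. apply (ex_derive_continuous (V := R_NormedModule)).
    eexists. apply is_derive_scal, is_derive_inv_cosh_sq.
  - exact HG.
  - intros x. apply Rabs_F5_integrand_le; lra.
  - change (is_lim (fun x => C * tanh x) m_infty (- C)).
    replace (Finite (- C)) with (Rbar_mult C (-1)) by (simpl; f_equal; ring).
    apply is_lim_scal_l, is_lim_tanh_m.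
  - change (is_lim (fun x => C * tanh x) p_infty C).
    replace (Finite C) with (Rbar_mult C 1) by (simpl; f_equal; ring).
    apply is_lim_scal_l, is_lim_tanh_p.
  - exists v. split; [exact Hv |].
    pose proof (sq_mul_exp_neg_quarter_sq_le a ha30). unfold C in Hle. lra.
Qed.
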